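(* Let $(\lambda,\mu,\mu')$ be an admissible triplet and let $\mu^*,\mu'^*$ be the associated weights. Then $\langle\lambda+\mu'^*,\alpha_j^\vee\rangle\ge0$ for every $j\in\{1,\dots,n-1\}$, i.e. $\lambda_j-\lambda_{j+1}+\mu'^*_j-\mu'^*_{j+1}\ge0$.
   Context: Type $D_n$ weights are $(\lambda_1,\dots,\lambda_n)$; $\langle\lambda,\alpha_j^\vee\rangle=\lambda_j-\lambda_{j+1}$ for $j<n$ and $\langle\lambda,\alpha_n^\vee\rangle=\lambda_{n-1}+\lambda_n$; $P_+=\{\lambda_j\in\frac12\mathbb Z,\lambda_j-\lambda_k\in\mathbb Z,\lambda_1\ge\dots\ge\lambda_n,\lambda_{n-1}+\lambda_n\ge0\}$; $P[S]=\{(\pm\frac12,\dots,\pm\frac12)\}$. For $k\ge0$, $\Delta^k$ is the set of sums $\mu_1+\dots+\mu_k$ over tuples $(\mu_1,\dots,\mu_k)\in P[S]^k$ all of whose partial sums lie in $P_+$ ($\Delta^0=\{0\}$). A triplet $(\lambda,\mu,\mu')$ is admissible if $\lambda\in\Delta^k$ for some $k\ge0$, $\mu,\mu'\in P[S]$, and $\lambda+\mu,\ \lambda+\mu+\mu'\in P_+$. A free interval of the triplet is a subset $\mathrm{Fr}\subset\{1,\dots,n\}$, maximal with respect to inclusion, such that $\lambda_j$ is constant on $\mathrm{Fr}$ and $\mu_j\mu'_j<0$ for all $j\in\mathrm{Fr}$. The weights $\mu^*,\mu'^*\in P[S]$ are defined as follows: outside all free intervals they agree with $\mu,\mu'$;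 on each free interval $\mathrm{Fr}$, with $b=|\{j\in\mathrm{Fr}:\mu'_j=+\frac12\}|$, $\mu'^*_j=+\frac12$ for the $b$ smallest elements $j$ of $\mathrm{Fr}$ and $\mu'^*_j=-\frac12$ for the remaining elements of $\mathrm{Fr}$, and $\mu^*_j=-\mu'^*_j$ for $j\in\mathrm{Fr}$. (Equivalently, $b_{\mu'^*}$, $b_{\mu^*}$ are obtained from $b_{\mu'}$, $b_\mu$ in the spinor crystal by moving, within each free interval, the $+$'s of $\mu'$ (resp. the $-$'s of $\mu$) leftward across the other signs by crystal operators.) *)

(* Type D_n weights are encoded as {ffun 'I_n -> rat};
   coordinate lambda_j (1 <= j <= n) of the paper is  l (j-1)  here. *)
From HB Require Import structures.
From mathcomp Require Import all_boot all_order all_algebra.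
Set Implicit Arguments. Unset Strict Implicit. Unset Printing Implicit Defensive.
Import Order.TTheory GRing.Theory Num.Theory.
Local Open Scope ring_scope.

Definition weight (n : nat) := {ffun 'I_n -> rat}.

Definition dominant (n : nat) (l : weight n) : bool :=
  [&& [forall j, (2 * l j) \is a Num.int],
      [forall j, forall k, (l j - l k) \is a Num.int],
      [forall j : 'I_n, forall k : 'I_n, (j <= k)%N ==> (l k <= l j)] &
      [forall j : 'I_n, forall k : 'I_n,
          ((j.+2 == n) && (k.+1 == n)) ==> (0 <= l j + l k)]].

Definition spin_weight (n : nat) (m : weight n) : bool :=
  [forall j, (m j == 1/2) || (m j == -(1/2))].

Definition in_Delta (n k : nat) (l : weight n) : Prop :=
  exists s : seq (weight n),
    [/\ size s = k, all (@spin_weight n) s,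
        (forall i, (1 <= i <= k)%N -> dominant (\sum_(m <- take i s) m))
      & l = \sum_(m <- s) m].

Definition admissible (n : nat) (l mu mu' : weight n) : Prop :=
  [/\ exists k, in_Delta k l, spin_weight mu, spin_weight mu',
      dominant (l + mu) & dominant (l + mu + mu')].

Definition free_prop (n : nat) (l mu mu' : weight n) (F : {set 'I_n}) : bool :=
  [forall j in F, forall k in F, l j == l k] &&
  [forall j in F, mu j * mu' j < 0].

Definition free_interval (n : nat) (l mu mu' : weight n) (F : {set 'I_n}) : bool :=
  maxset (free_prop l mu mu') F.

(* mu'^* : on a free interval F with b entries of mu' equal to +1/2, the b
   smallest elements of F get +1/2, the others -1/2; unchanged elsewhere. *)
Definition mu'star (n : nat) (l mu mu' : weight n) : weight n :=
  [ffun j => match [pick F | free_interval l mu mu' F && (j \in F)] with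
   | Some F =>
       if (#|[set k in F | (k < j)%N]| < #|[set k in F | mu' k == 1/2]|)%N
       then 1/2 else -(1/2)
   | None => mu' j
   end].

Definition mustar (n : nat) (l mu mu' : weight n) : weight n :=
  [ffun j => if [exists F, free_interval l mu mu' F && (j \in F)]
             then - mu'star l mu mu' j else mu j].

From HB Require Import structures.
From mathcomp Require Import all_boot all_order all_algebra.
From mathcomp Require Import lra.
Import Order.TTheory GRing.Theory Num.Theory.
Local Open Scope ring_scope.
Set Implicit Arguments. Unset Strict Implicit.

(* If lambda_j > lambda_(j+1), the gap is a positive integer, hence at least 1,
   which absorbs the difference of two entries +-1/2 of mu'^*.  If
   lambda_j = lambda_(j+1), dominance of lambda + mu + mu' gives
   mu_(j+1) + mu'_(j+1) <= mu_j + mu'_j, where mu_i + mu'_i is 0 at a free index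
   and 2 mu'_i elsewhere; this settles the cases where j or j+1 is not free,
   and if both are free they lie in the same free interval, on which mu'^* is
   nonincreasing by construction. *)

Section Dominant.
Variable n : nat.
Implicit Types (l : weight n) (j k : 'I_n).

Lemma dominant0 : dominant (0 : weight n).
Proof.
apply/and4P; split; apply/forallP => j; rewrite ?ffunE //;
  apply/forallP => k; rewrite !ffunE ?subr0 ?addr0 //; exact/implyP.
Qed.

Lemma in_Delta_dominant r l : in_Delta r l -> dominant l.
Proof.
case=> s [size_s _ dom_take ->].
case: r size_s dom_take => [|r] size_s dom_take.
  by move/size0nil: size_s => ->; rewrite big_nil; exact: dominant0.
by have := dom_take r.+1; rewrite -size_s take_size size_s leqnn; apply.
Qed.

Lemma dominant_le l j k : dominant l -> (j <= k)%N -> l k <= l j.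
Proof. by case/and4P=> _ _ /forallP/(_ j)/forallP/(_ k)/implyP. Qed.

Lemma dominant_sub_int l j k : dominant l -> l j - l k \is a Num.int.
Proof. by case/and4P=> _ /forallP/(_ j)/forallP/(_ k). Qed.

Lemma dominant_gap l j k : dominant l -> (j <= k)%N ->
  l j = l k \/ 1 <= l j - l k.
Proof.
move=> dom_l le_jk; case/intrP: (dominant_sub_int j k dom_l) => m def_m.
have : 0 <= l j - l k by rewrite subr_ge0 dominant_le.
rewrite def_m ler0z; case: m def_m => [[|m]|//] def_m _.
  by left; apply: subr0_eq; rewrite def_m.
by right; rewrite ler1z.
Qed.

End Dominant.

Section Spin.
Variable n : nat.
Implicit Types (m : weight n) (j : 'I_n).

Lemma spin_weightP m j : spin_weight m -> m j = 1/2 \/ m j = -(1/2).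
Proof. by move/forallP/(_ j)/orP => [] /eqP; auto. Qed.

Lemma spin_weight_bound m j : spin_weight m -> -(1/2) <= m j <= 1/2.
Proof. by move/(spin_weightP j) => [] ->; apply/andP; split; lra. Qed.

Lemma spin_weight_ge0 m j : spin_weight m -> 0 <= m j -> m j = 1/2.
Proof. by move/(spin_weightP j) => [] ->; lra. Qed.

Lemma spin_weight_le0 m j : spin_weight m -> m j <= 0 -> m j = -(1/2).
Proof. by move/(spin_weightP j) => [] ->; lra. Qed.

Lemma spin_add_opposite m m' j : spin_weight m -> spin_weight m' ->
  m j * m' j < 0 -> m j + m' j = 0.
Proof.
by move=> /(spin_weightP j) + /(spin_weightP j) => [] [] -> [] ->; lra.
Qed.

Lemma spin_add_same m m' j : spin_weight m -> spin_weight m' ->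
  0 <= m j * m' j -> m j + m' j = 2 * m' j.
Proof.
by move=> /(spin_weightP j) + /(spin_weightP j) => [] [] -> [] ->; lra.
Qed.

End Spin.

Section FreeIntervals.
Variables (n : nat) (l mu mu' : weight n).
Implicit Types (F : {set 'I_n}) (j k : 'I_n).

Definition free_index j := [exists F, free_interval l mu mu' F && (j \in F)].

Lemma free_interval_mul_lt0 F j :
  free_interval l mu mu' F -> j \in F -> mu j * mu' j < 0.
Proof. by move=> /maxsetp/andP[_ /forallP/(_ j)/implyP]. Qed.

Lemma free_interval_const F j k :
  free_interval l mu mu' F -> j \in F -> k \in F -> l j = l k.
Proof.
move=> /maxsetp/andP[/forallP/(_ j)/implyP l_const _] jF kF.
by move: (l_const jF) => /forallP/(_ k)/implyP/(_ kF)/eqP.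
Qed.

Lemma free_interval_eq F F' j k :
  free_interval l mu mu' F -> free_interval l mu mu' F' ->
  j \in F -> k \in F' -> l j = l k -> F = F'.
Proof.
move=> freeF freeF' jF kF' l_jk.
have l_FF' x : x \in F :|: F' -> l x = l j.
  case/setUP => [xF | xF']; first exact: free_interval_const freeF xF jF.
  by rewrite l_jk; exact: free_interval_const freeF' xF' kF'.
have propFF' : free_prop l mu mu' (F :|: F').
  apply/andP; split; apply/forall_inP => x xFF'.
    by apply/forall_inP => y yFF'; rewrite (l_FF' x xFF') (l_FF' y yFF').
  case/setUP: xFF' => [xF | xF']; first exact: free_interval_mul_lt0 freeF xF.
  exact: free_interval_mul_lt0 freeF' xF'.
rewrite -(maxsetsup freeF propFF' (subsetUl F F')).
exact: maxsetsup freeF' propFF' (subsetUr F F').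
Qed.

(* If mu_j mu'_j < 0, the singleton {j} satisfies free_prop and extends to a free interval. *)
Lemma not_free_index_mul_ge0 j : ~~ free_index j -> 0 <= mu j * mu' j.
Proof.
move=> not_free; rewrite leNgt; apply: contra not_free => neg_j.
have prop_j : free_prop l mu mu' [set j].
  apply/andP; split; apply/forall_inP => x /set1P ->; last exact: neg_j.
  by apply/forall_inP => y /set1P ->.
case: (maxset_exists prop_j) => F freeF; rewrite sub1set => jF.
by apply/existsP; exists F; apply/andP.
Qed.

Lemma mu'star_not_free j : ~~ free_index j -> mu'star l mu mu' j = mu' j.
Proof.
move=> /existsPn not_free; rewrite /mu'star ffunE.
by case: pickP => // F F_j; move: (not_free F); rewrite F_j.
Qed.

Lemma mu'star_free F j : free_interval l mu mu' F -> j \in F ->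
  mu'star l mu mu' j =
  if (#|[set k in F | (k < j)%N]| < #|[set k in F | mu' k == 1/2]|)%N
  then 1/2 else -(1/2).
Proof.
move=> freeF jF; rewrite /mu'star ffunE.
case: pickP => [F' /andP[freeF' jF'] | /(_ F)]; last by rewrite freeF jF.
by rewrite (free_interval_eq freeF' freeF jF' jF).
Qed.

Lemma mu'star_free_nonincr F j k : free_interval l mu mu' F ->
  j \in F -> k \in F -> (j <= k)%N -> mu'star l mu mu' k <= mu'star l mu mu' j.
Proof.
move=> freeF jF kF le_jk; rewrite !(mu'star_free freeF) //.
have le_before : (#|[set x in F | (x < j)%N]| <= #|[set x in F | (x < k)%N]|)%N.
  apply/subset_leq_card/subsetP => x; rewrite !inE => /andP[-> /= lt_xj].
  exact: leq_trans lt_xj le_jk.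
case: ifP => [lt_k | _]; case: ifP => lt_j; first exact: lexx.
- by case/negP: (negbT lt_j); exact: leq_ltn_trans le_before lt_k.
- lra.
- exact: lexx.
Qed.

Lemma spin_weight_mu'star : spin_weight mu' -> spin_weight (mu'star l mu mu').
Proof.
move=> spin_mu'; apply/forallP => j; rewrite /mu'star ffunE.
by case: pickP => [F _ | _]; [case: ifP; rewrite eqxx ?orbT | exact: (forallP spin_mu')].
Qed.

Hypotheses (spin_mu : spin_weight mu) (spin_mu' : spin_weight mu').

Lemma mu_add_mu'_free j : free_index j -> mu j + mu' j = 0.
Proof.
case/existsP=> F /andP[freeF jF]; apply: spin_add_opposite => //.
exact: free_interval_mul_lt0 freeF jF.
Qed.

Lemma mu_add_mu'_not_free j : ~~ free_index j -> mu j + mu' j = 2 * mu' j.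
Proof. by move=> not_free; apply: spin_add_same => //; exact: not_free_index_mul_ge0. Qed.

Lemma mu'star_nonincr_eq_l j k : (j <= k)%N -> l j = l k ->
  mu k + mu' k <= mu j + mu' j -> mu'star l mu mu' k <= mu'star l mu mu' j.
Proof.
move=> le_jk l_jk le_sum.
have spin_star := spin_weight_mu'star spin_mu'.
have [free_j | not_free_j] := boolP (free_index j);
  have [free_k | not_free_k] := boolP (free_index k).
- case/existsP: free_j => F /andP[freeF jF]; case/existsP: free_k => F' /andP[freeF' kF'].
  have same_F := free_interval_eq freeF freeF' jF kF' l_jk.
  by rewrite -same_F in kF'; exact: mu'star_free_nonincr freeF jF kF' le_jk.
- rewrite (mu_add_mu'_free free_j) (mu_add_mu'_not_free not_free_k) in le_sum.
  rewrite (mu'star_not_free not_free_k) (spin_weight_le0 (j := k) spin_mu'); last lra.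
  by case/andP: (spin_weight_bound j spin_star).
- rewrite (mu_add_mu'_not_free not_free_j) (mu_add_mu'_free free_k) in le_sum.
  rewrite (mu'star_not_free not_free_j) (spin_weight_ge0 (j := j) spin_mu'); last lra.
  by case/andP: (spin_weight_bound k spin_star).
- rewrite (mu_add_mu'_not_free not_free_j) (mu_add_mu'_not_free not_free_k) in le_sum.
  by rewrite !mu'star_not_free //; lra.
Qed.

End FreeIntervals.

Theorem proposition6p4 (n : nat) (hn : (2 <= n)%N) (l mu mu' : weight n) :
  admissible l mu mu' ->
  forall j k : 'I_n, nat_of_ord k = j.+1 ->
    0 <= l j - l k + mu'star l mu mu' j - mu'star l mu mu' k.
Proof.
move=> [[r Delta_l] spin_mu spin_mu' _ dom_sum] j k def_k.
have le_jk : (j <= k)%N by rewrite def_k.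
have [l_jk | gap] := dominant_gap (in_Delta_dominant Delta_l) le_jk.
  have le_sum : mu k + mu' k <= mu j + mu' j.
    by have := dominant_le dom_sum le_jk; rewrite !ffunE l_jk -!addrA lerD2l.
  rewrite l_jk subrr add0r subr_ge0.
  exact: (mu'star_nonincr_eq_l (l := l) spin_mu spin_mu' le_jk l_jk le_sum).
have spin_star := spin_weight_mu'star l mu spin_mu'.
case/andP: (spin_weight_bound j spin_star) => ge_j _.
case/andP: (spin_weight_bound k spin_star) => _ le_k; lra.
Qed.
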